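(* For every formula $\phi$ of classical modal team logic $\mathcal{ML}$ and every letter $p$, there is a formula $\theta\in\mathcal{ML}$ equivalent to $\tilde\exists p\,\phi$ in team semantics, i.e. for every team model $(M,X)$: $(M,X)\models\theta$ iff there is a team model $(N,Y)$ with $(N,Y)\rightleftharpoons_{\mathcal L(\phi)\setminus\{p\}}(M,X)$ and $(N,Y)\models\phi$.
   Context: Kripke models $M=(W,R,V)$, $V:W\to\mathcal P(Prop)$; team models $(M,X)$, $X\subseteq W$. Formulas of $\mathcal{ML}$: $p,\neg p,\bot,\wedge,\otimes,\Diamond,\Box$, with team semantics: $(M,X)\models p$ iff $p\in V(s)$ for all $s\in X$; $\neg p$ iff $p\notin V(s)$ for all $s\in X$; $\bot$ iff $X=\emptyset$; $\wedge$ componentwise; $\otimes$: $X=X_1\cup X_2$ with $(M,X_i)\models\alpha_i$; $(M,X)\models\Diamond\alpha$ iff $(M,Y)\models\alpha$ for some $Y$ such that every $x\in X$ has an $R$-successor in $Y$ and every $y\in Y$ is an $R$-successor of some $x\in X$; $(M,X)\models\Box\alpha$ iff $(M,R[X])\models\alpha$, $R[X]$ the set of successors of elements of $X$. $\mathcal L(\phi)$ is the set of letters in $\phi$. $(M,w)\rightleftharpoons_{\mathcal P}(N,v)$: there is a relation containing $(w,v)$ whose pairs agree on letters of $\mathcal P$ and satisfy forth and back conditions; $(M,X)\rightleftharpoons_{\mathcal P}(N,Y)$: each $x\in X$ is $\mathcal P$-bisimilar to some $y\in Y$ and each $y\in Y$ to some $x\in X$. *)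

From Stdlib Require Import List Arith.
Unset Implicit Arguments.

Definition letter := nat.

Record kmodel : Type := KModel {
  world : Type;
  rel : world -> world -> Prop;
  val : world -> letter -> Prop
}.

Definition team (M : kmodel) := world M -> Prop.

Inductive form : Type :=
| FAtom : letter -> form
| FNAtom : letter -> form
| FBot : form
| FAnd : form -> form -> form
| FOtimes : form -> form -> form
| FDia : form -> form
| FBox : form -> form.

Fixpoint letters (phi : form) : list letter :=
  match phi with
  | FAtom p | FNAtom p => p :: nil
  | FBot => nil
  | FAnd a b | FOtimes a b => letters a ++ letters b
  | FDia a | FBox a => letters a
  end.

Fixpoint tsat (M : kmodel) (phi : form) (X : team M) : Prop :=
  match phi with
  | FAtom p => forall s, X s -> val M s p
  | FNAtom p => forall s, X s -> ~ val M s p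
  | FBot => forall s, ~ X s
  | FAnd a b => tsat M a X /\ tsat M b X
  | FOtimes a b => exists X1 X2 : team M,
      (forall s, X s <-> (X1 s \/ X2 s)) /\ tsat M a X1 /\ tsat M b X2
  | FDia a => exists Y : team M,
      (forall x, X x -> exists y, Y y /\ rel M x y) /\
      (forall y, Y y -> exists x, X x /\ rel M x y) /\
      tsat M a Y
  | FBox a => tsat M a (fun y => exists x, X x /\ rel M x y)
  end.

Definition bisim_pt (P : letter -> Prop) (M N : kmodel) (w : world M) (v : world N) : Prop :=
  exists Z : world M -> world N -> Prop,
    Z w v /\
    forall a b, Z a b ->
      (forall q, P q -> (val M a q <-> val N b q)) /\
      (forall a', rel M a a' -> exists b', rel N b b' /\ Z a' b') /\
      (forall b', rel N b b' -> exists a', rel M a a' /\ Z a' b').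

Definition bisim_team (P : letter -> Prop) (M : kmodel) (X : team M)
    (N : kmodel) (Y : team N) : Prop :=
  (forall x, X x -> exists y, Y y /\ bisim_pt P M N x y) /\
  (forall y, Y y -> exists x, X x /\ bisim_pt P M N x y).

Definition letters_minus (phi : form) (p : letter) : letter -> Prop :=
  fun q => In q (letters phi) /\ q <> p.

From Stdlib Require Import List Arith Lia Classical ClassicalEpsilon.
Import ListNotations.

(* Team semantics of ML is flat: a team satisfies a formula iff each of its
   worlds does, so the quantifier only has to be expressed pointwise.  Let
   Q = L(phi) \ {p} and n = md(phi).  Modulo Q-bisimilarity up to depth n there
   are finitely many types of pointed models, each defined by a Hintikka
   formula; theta is the disjunction of the Hintikka formulas of the types
   realized in some model of phi.  If x has such a type, realized at (N, y)
   satisfying phi, then x and y are n-bisimilar over Q; grafting the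
   p-valuation of N onto M along this n-bisimulation gives a model that is
   Q-bisimilar to (M, x) and n-bisimilar to (N, y) over Q and p, hence
   satisfies phi.  Pointwise witnesses are then glued by a disjoint union. *)

Fixpoint sat (M : kmodel) (w : world M) (f : form) : Prop :=
  match f with
  | FAtom q => val M w q
  | FNAtom q => ~ val M w q
  | FBot => False
  | FAnd a b => sat M w a /\ sat M w b
  | FOtimes a b => sat M w a \/ sat M w b
  | FDia a => exists w', rel M w w' /\ sat M w' a
  | FBox a => forall w', rel M w w' -> sat M w' a
  end.

Lemma tsat_flat (f : form) (M : kmodel) (X : team M) :
  tsat M f X <-> forall x, X x -> sat M x f.
Proof.
  revert M X; induction f as [q|q| |a IHa b IHb|a IHa b IHb|a IHa|a IHa];
    intros M X; simpl.
  - tauto.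
  - tauto.
  - firstorder.
  - rewrite IHa, IHb. firstorder.
  - split.
    + intros (X1 & X2 & HX & H1 & H2) x Hx.
      rewrite IHa in H1; rewrite IHb in H2. apply HX in Hx as [Hx|Hx]; auto.
    + intros H. exists (fun x => X x /\ sat M x a), (fun x => X x /\ sat M x b).
      rewrite IHa, IHb. split; [|tauto].
      intros s; split; [intros Hs; specialize (H s Hs)|]; tauto.
  - split.
    + intros (Y & Hforth & _ & HY) x Hx. rewrite IHa in HY.
      destruct (Hforth x Hx) as (y & Hy & Hr). eauto.
    + intros H. exists (fun y => (exists x, X x /\ rel M x y) /\ sat M y a).
      rewrite IHa. split; [|split]; [|firstorder|firstorder].
      intros x Hx. destruct (H x Hx) as (y & Hr & Hs). exists y. split; [split; [exists x|]|]; auto.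
  - rewrite IHa. firstorder.
Qed.

Fixpoint depth (f : form) : nat :=
  match f with
  | FAtom _ | FNAtom _ | FBot => 0
  | FAnd a b | FOtimes a b => Nat.max (depth a) (depth b)
  | FDia a | FBox a => S (depth a)
  end.

Fixpoint nbisim (P : letter -> Prop) (n : nat) (M N : kmodel)
    (w : world M) (v : world N) : Prop :=
  (forall q, P q -> (val M w q <-> val N v q)) /\
  match n with
  | 0 => True
  | S m => (forall w', rel M w w' -> exists v', rel N v v' /\ nbisim P m M N w' v') /\
           (forall v', rel N v v' -> exists w', rel M w w' /\ nbisim P m M N w' v')
  end.

Lemma nbisim_val (P : letter -> Prop) n M N w v :
  nbisim P n M N w v -> forall q, P q -> (val M w q <-> val N v q).
Proof. destruct n; intros H; apply H. Qed.

Lemma nbisim_weaken (P P' : letter -> Prop) : (forall q, P' q -> P q) ->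
  forall n M N w v, nbisim P n M N w v -> nbisim P' n M N w v.
Proof.
  intros HP n; induction n as [|n IH]; intros M N w v [Hval Hstep]; split; auto.
  destruct Hstep as [Hforth Hback]. split.
  - intros w' Hr. destruct (Hforth w' Hr) as (v' & ? & ?). eauto.
  - intros v' Hr. destruct (Hback v' Hr) as (w' & ? & ?). eauto.
Qed.

Lemma bisim_pt_nbisim (P : letter -> Prop) M N w v :
  bisim_pt P M N w v -> forall n, nbisim P n M N w v.
Proof.
  intros (Z & Hz & HZ) n. revert w v Hz.
  induction n as [|n IH]; intros w v Hz; destruct (HZ _ _ Hz) as (Hval & Hforth & Hback);
    split; auto.
  split.
  - intros w' Hr. destruct (Hforth w' Hr) as (v' & ? & ?). eauto.
  - intros v' Hr. destruct (Hback v' Hr) as (w' & ? & ?). eauto.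
Qed.

Lemma bisim_pt_weaken (P P' : letter -> Prop) : (forall q, P' q -> P q) ->
  forall M N w v, bisim_pt P M N w v -> bisim_pt P' M N w v.
Proof.
  intros HP M N w v (Z & Hz & HZ). exists Z. split; auto.
  intros a b Hab. destruct (HZ a b Hab) as (? & ? & ?). auto.
Qed.

Definition top : form := FOtimes (FAtom 0) (FNAtom 0).

Lemma sat_top M w : sat M w top.
Proof. apply classic. Qed.

(* [top] is admitted whatever [P] is: its letter is irrelevant to its truth. *)
Inductive fragment (P : letter -> Prop) : nat -> form -> Prop :=
| frag_atom n q : P q -> fragment P n (FAtom q)
| frag_natom n q : P q -> fragment P n (FNAtom q)
| frag_top n : fragment P n top
| frag_bot n : fragment P n FBot
| frag_and n a b : fragment P n a -> fragment P n b -> fragment P n (FAnd a b)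
| frag_otimes n a b : fragment P n a -> fragment P n b -> fragment P n (FOtimes a b)
| frag_dia n a : fragment P n a -> fragment P (S n) (FDia a)
| frag_box n a : fragment P n a -> fragment P (S n) (FBox a).

Lemma fragment_of_letters_depth (P : letter -> Prop) f n :
  (forall q, In q (letters f) -> P q) -> depth f <= n -> fragment P n f.
Proof.
  revert n; induction f; intros n HP Hd; simpl in *.
  1-3: constructor; auto.
  1-2: constructor; [apply IHf1 | apply IHf2];
         try (intros; apply HP, in_or_app; auto); lia.
  1-2: destruct n; [lia|]; constructor; apply IHf; auto; lia.
Qed.

Lemma fragment_nbisim_invariant (P : letter -> Prop) n f : fragment P n f ->
  forall M N w v, nbisim P n M N w v -> (sat M w f <-> sat N v f).
Proof.
  induction 1 as [n q Hq|n q Hq|n|n|n a b _ IHa _ IHb|n a b _ IHa _ IHb|n a _ IH|n a _ IH];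
    intros M N w v Hb; simpl.
  - exact (nbisim_val _ _ _ _ _ _ Hb q Hq).
  - rewrite (nbisim_val _ _ _ _ _ _ Hb q Hq). tauto.
  - split; intros _; apply sat_top.
  - tauto.
  - rewrite (IHa _ _ _ _ Hb), (IHb _ _ _ _ Hb). tauto.
  - rewrite (IHa _ _ _ _ Hb), (IHb _ _ _ _ Hb). tauto.
  - destruct Hb as (_ & Hforth & Hback). split.
    + intros (w' & Hr & Hs). destruct (Hforth w' Hr) as (v' & Hr' & Hb').
      exists v'. rewrite <- (IH _ _ _ _ Hb'). auto.
    + intros (v' & Hr & Hs). destruct (Hback v' Hr) as (w' & Hr' & Hb').
      exists w'. rewrite (IH _ _ _ _ Hb'). auto.
  - destruct Hb as (_ & Hforth & Hback). split.
    + intros Hs v' Hr. destruct (Hback v' Hr) as (w' & Hr' & Hb').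
      rewrite <- (IH _ _ _ _ Hb'). auto.
    + intros Hs w' Hr. destruct (Hforth w' Hr) as (v' & Hr' & Hb').
      rewrite (IH _ _ _ _ Hb'). auto.
Qed.

Definition holds (A : Prop) : bool := if excluded_middle_informative A then true else false.

Lemma holds_true (A : Prop) : holds A = true <-> A.
Proof. unfold holds. destruct excluded_middle_informative; split; congruence || tauto. Qed.

Fixpoint subseqs {A : Type} (l : list A) : list (list A) :=
  match l with
  | [] => [[]]
  | a :: l => map (cons a) (subseqs l) ++ subseqs l
  end.

Lemma filter_In_subseqs {A : Type} (b : A -> bool) l : In (filter b l) (subseqs l).
Proof.
  induction l as [|a l IH]; simpl; auto.
  apply in_or_app. destruct (b a); [left; apply in_map|right]; auto.
Qed.

Fixpoint bigand (l : list form) : form :=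
  match l with [] => top | a :: l => FAnd a (bigand l) end.
Fixpoint bigor (l : list form) : form :=
  match l with [] => FBot | a :: l => FOtimes a (bigor l) end.

Lemma sat_bigand M w l : sat M w (bigand l) <-> forall f, In f l -> sat M w f.
Proof.
  induction l as [|a l IH]; simpl.
  - split; [tauto|]. intros _. apply sat_top.
  - rewrite IH. firstorder. subst; auto.
Qed.

Lemma sat_bigor M w l : sat M w (bigor l) <-> exists f, In f l /\ sat M w f.
Proof.
  induction l as [|a l IH]; simpl.
  - firstorder.
  - rewrite IH. firstorder. subst; auto.
Qed.

Lemma fragment_bigand (P : letter -> Prop) n l :
  (forall f, In f l -> fragment P n f) -> fragment P n (bigand l).
Proof. induction l; simpl; intros H; constructor; auto. Qed.

Lemma fragment_bigor (P : letter -> Prop) n l :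
  (forall f, In f l -> fragment P n f) -> fragment P n (bigor l).
Proof. induction l; simpl; intros H; constructor; auto. Qed.

(* A type of depth n over Q: the letters of Q true at a point and, if n > 0,
   the types of depth n - 1 realized at its successors. *)
Inductive mtype : Type := Ty : list letter -> list mtype -> mtype.

Fixpoint types (Q : list letter) (n : nat) : list mtype :=
  match n with
  | 0 => map (fun T => Ty T []) (subseqs Q)
  | S m => flat_map (fun T => map (Ty T) (subseqs (types Q m))) (subseqs Q)
  end.

Definition lits (Q T : list letter) : form :=
  bigand (map (fun q => if in_dec Nat.eq_dec q T then FAtom q else FNAtom q) Q).

Fixpoint hintikka (Q : list letter) (n : nat) (t : mtype) : form :=
  match t, n with
  | Ty T _, 0 => lits Q T
  | Ty T Ss, S m =>
      FAnd (lits Q T) (FAnd (bigand (map (fun s => FDia (hintikka Q m s)) Ss))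
                            (FBox (bigor (map (hintikka Q m) Ss))))
  end.

Lemma sat_lits M w Q T :
  sat M w (lits Q T) <-> forall q, In q Q -> (val M w q <-> In q T).
Proof.
  unfold lits. rewrite sat_bigand. split.
  - intros H q Hq.
    specialize (H _ (in_map (fun q => if in_dec Nat.eq_dec q T then FAtom q else FNAtom q)
                            _ _ Hq)).
    destruct in_dec; simpl in H; tauto.
  - intros H f Hf. apply in_map_iff in Hf as (q & <- & Hq). specialize (H q Hq).
    destruct in_dec; simpl; tauto.
Qed.

Lemma fragment_hintikka (Q : list letter) n t : fragment (fun q => In q Q) n (hintikka Q n t).
Proof.
  assert (Hlits : forall m T, fragment (fun q => In q Q) m (lits Q T)).
  { intros m T. apply fragment_bigand. intros f Hf.
    apply in_map_iff in Hf as (q & <- & Hq). destruct in_dec; constructor; auto. }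
  revert t; induction n as [|n IH]; intros [T Ss]; simpl; auto.
  repeat constructor; auto.
  - apply fragment_bigand. intros f Hf. apply in_map_iff in Hf as (s & <- & _).
    constructor; auto.
  - apply fragment_bigor. intros f Hf. apply in_map_iff in Hf as (s & <- & _). auto.
Qed.

Lemma hintikka_exists Q n M w : exists t, In t (types Q n) /\ sat M w (hintikka Q n t).
Proof.
  revert M w; induction n as [|n IH]; intros M w;
    set (T := filter (fun q => holds (val M w q)) Q);
    assert (HT : forall q, In q Q -> (val M w q <-> In q T))
      by (intros q Hq; unfold T; rewrite filter_In, holds_true; tauto).
  - exists (Ty T []). split; [apply (in_map (fun T => Ty T [])), filter_In_subseqs|].
    simpl. rewrite sat_lits. exact HT.
  - set (Ss := filter (fun s => holds (exists u, rel M w u /\ sat M u (hintikka Q n s)))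
                      (types Q n)).
    assert (HSs : forall s, In s Ss <-> In s (types Q n) /\
                                    exists u, rel M w u /\ sat M u (hintikka Q n s))
      by (intros s; unfold Ss; rewrite filter_In, holds_true; tauto).
    exists (Ty T Ss). split.
    + apply in_flat_map. exists T. split; [apply filter_In_subseqs|].
      apply in_map, filter_In_subseqs.
    + simpl. split; [|split].
      * rewrite sat_lits. exact HT.
      * rewrite sat_bigand. intros f Hf. apply in_map_iff in Hf as (s & <- & Hs).
        apply HSs in Hs as [_ Hs]. exact Hs.
      * intros u Hu. rewrite sat_bigor. destruct (IH M u) as (s & Hs & Hsat).
        exists (hintikka Q n s). split; auto. apply in_map, HSs. eauto.
Qed.

Lemma hintikka_nbisim Q n t M N w v :
  sat M w (hintikka Q n t) -> sat N v (hintikka Q n t) -> nbisim (fun q => In q Q) n M N w v.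
Proof.
  revert t M N w v; induction n as [|n IH]; intros [T Ss] M N w v Hw Hv; simpl in *.
  - rewrite sat_lits in Hw, Hv. split; auto.
    intros q Hq. rewrite (Hw q Hq), (Hv q Hq). tauto.
  - destruct Hw as (Hw & Dw & Bw), Hv as (Hv & Dv & Bv).
    rewrite sat_lits in Hw, Hv. rewrite sat_bigand in Dw, Dv. split; [|split].
    + intros q Hq. rewrite (Hw q Hq), (Hv q Hq). tauto.
    + intros w' Hr. apply Bw, sat_bigor in Hr as (f & Hf & Hs).
      apply in_map_iff in Hf as (s & <- & Hin).
      destruct (Dv _ (in_map (fun s => FDia (hintikka Q n s)) _ _ Hin)) as (v' & Hr' & Hs').
      eauto.
    + intros v' Hr. apply Bv, sat_bigor in Hr as (f & Hf & Hs).
      apply in_map_iff in Hf as (s & <- & Hin).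
      destruct (Dw _ (in_map (fun s => FDia (hintikka Q n s)) _ _ Hin)) as (w' & Hr' & Hs').
      eauto.
Qed.

(* A world [inl (k, a, b)] pairs [a] with a [b] that is [k]-bisimilar to it and
   takes the value of [p] from [b]; after [k] steps the model continues as [M]. *)
Definition graft_world (M N : kmodel) : Type := ((nat * world M * world N) + world M)%type.

Definition graft_rel (P : letter -> Prop) (M N : kmodel) (s s' : graft_world M N) : Prop :=
  match s, s' with
  | inl (S k, a, b), inl (k', a', b') =>
      k' = k /\ rel M a a' /\ rel N b b' /\ nbisim P k M N a' b'
  | inl (0, a, _), inr a' => rel M a a'
  | inr a, inr a' => rel M a a'
  | _, _ => False
  end.

Definition graft_val (p : letter) (M N : kmodel) (s : graft_world M N) (q : letter) : Prop :=
  match s with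
  | inl (_, a, b) => if Nat.eq_dec q p then val N b q else val M a q
  | inr a => val M a q
  end.

Definition graft (P : letter -> Prop) (p : letter) (M N : kmodel) : kmodel :=
  KModel (graft_world M N) (graft_rel P M N) (graft_val p M N).

Lemma graft_bisim_pt (P : letter -> Prop) p M N : (forall q, P q -> q <> p) ->
  forall k a b, nbisim P k M N a b -> bisim_pt P (graft P p M N) M (inl (k, a, b)) a.
Proof.
  intros HP k a b Hb.
  exists (fun (s : graft_world M N) a0 =>
            match s with inl (k, a, b) => a0 = a /\ nbisim P k M N a b | inr a => a0 = a end).
  split; [auto|].
  intros [[[k' a'] b']|a'] a0 Hs; simpl.
  - destruct Hs as [-> Hn]. split; [|split].
    + intros q Hq. destruct (Nat.eq_dec q p); [exfalso; apply (HP q); auto|tauto].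
    + intros [[[k2 a2] b2]|a2] Hr; destruct k' as [|k']; simpl in Hr; try contradiction.
      * destruct Hr as (-> & ? & ? & ?). eauto.
      * eauto.
    + intros a2 Hr. destruct k' as [|k'].
      * exists (inr a2). simpl. auto.
      * destruct Hn as (_ & Hforth & _). destruct (Hforth a2 Hr) as (b2 & ? & ?).
        exists (inl (k', a2, b2)). simpl. auto.
  - subst a0. split; [|split].
    + tauto.
    + intros [[[k2 a2] b2]|a2] Hr; simpl in Hr; [contradiction|]. eauto.
    + intros a2 Hr. exists (inr a2). simpl. auto.
Qed.

Lemma graft_nbisim (P : letter -> Prop) p M N k a b : nbisim P k M N a b ->
  nbisim (fun q => P q \/ q = p) k (graft P p M N) N (inl (k, a, b)) b.
Proof.
  revert a b; induction k as [|k IH]; intros a b Hb; split.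
  1,3: intros q Hq; simpl; destruct (Nat.eq_dec q p); [tauto|];
       apply (nbisim_val _ _ _ _ _ _ Hb); destruct Hq; tauto.
  - auto.
  - split.
    + intros [[[k2 a2] b2]|a2] Hr; simpl in Hr; [|contradiction].
      destruct Hr as (-> & _ & ? & ?). eauto.
    + intros b2 Hr. destruct Hb as (_ & _ & Hback). destruct (Hback b2 Hr) as (a2 & ? & ?).
      exists (inl (k, a2, b2)). simpl. auto.
Qed.

Lemma sat_graft (P : letter -> Prop) p M N f n a b :
  (forall q, In q (letters f) -> P q \/ q = p) -> depth f <= n ->
  nbisim P n M N a b -> sat N b f -> sat (graft P p M N) (inl (n, a, b)) f.
Proof.
  intros Hf Hd Hb Hs.
  apply (fragment_nbisim_invariant _ n f (fragment_of_letters_depth _ f n Hf Hd)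
           _ _ _ _ (graft_nbisim _ p _ _ _ _ _ Hb)).
  exact Hs.
Qed.

Definition sum_rel {I : Type} (F : I -> kmodel) (s s' : {i : I & world (F i)}) : Prop :=
  exists a', s' = existT _ (projT1 s) a' /\ rel (F (projT1 s)) (projT2 s) a'.

Definition sum_model {I : Type} (F : I -> kmodel) : kmodel :=
  KModel {i : I & world (F i)} (sum_rel F) (fun s q => val (F (projT1 s)) (projT2 s) q).

Lemma sat_sum_model {I : Type} (F : I -> kmodel) f i a :
  sat (sum_model F) (existT _ i a) f <-> sat (F i) a f.
Proof.
  revert i a; induction f; intros i a; simpl; try tauto.
  - rewrite IHf1, IHf2; tauto.
  - rewrite IHf1, IHf2; tauto.
  - split.
    + intros (s' & (a' & -> & Hr) & Hs). rewrite IHf in Hs. eauto.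
    + intros (a' & Hr & Hs). exists (existT _ i a'). rewrite IHf.
      split; [exists a'|]; auto.
  - split.
    + intros H a' Hr. rewrite <- IHf. apply H. exists a'. auto.
    + intros H s' (a' & -> & Hr). rewrite IHf. auto.
Qed.

Lemma bisim_pt_sum_model (P : letter -> Prop) {I : Type} (F : I -> kmodel) M i a x :
  bisim_pt P (F i) M a x -> bisim_pt P (sum_model F) M (existT _ i a) x.
Proof.
  intros (Z & Hz & HZ).
  exists (fun s m => exists a, s = existT _ i a /\ Z a m). split; [eauto|].
  intros s m (a0 & -> & Hs). destruct (HZ _ _ Hs) as (Hval & Hforth & Hback).
  split; [|split]; auto.
  - intros s' (a' & -> & Hr). destruct (Hforth a' Hr) as (m' & ? & ?). eauto.
  - intros m' Hr. destruct (Hback m' Hr) as (a' & ? & ?). exists (existT _ i a').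
    split; [exists a'|]; eauto.
Qed.

Lemma team_of_pointwise (P : letter -> Prop) f M (X : team M) :
  (forall x, X x -> exists N y, bisim_pt P N M y x /\ sat N y f) ->
  exists N Y, bisim_team P N Y M X /\ tsat N f Y.
Proof.
  intros H.
  destruct (choice (fun (x : {x | X x}) (c : {N : kmodel & world N}) =>
                      bisim_pt P (projT1 c) M (projT2 c) (proj1_sig x) /\
                      sat (projT1 c) (projT2 c) f))
    as (F & HF).
  { intros [x Hx]. destruct (H x Hx) as (N & y & ?). exists (existT _ N y). auto. }
  exists (sum_model (fun x => projT1 (F x))), (fun s => projT2 s = projT2 (F (projT1 s))).
  split; [split|].
  - intros [x a] Ha. simpl in Ha. subst a. exists (proj1_sig x).
    split; [apply proj2_sig|]. apply bisim_pt_sum_model, HF.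
  - intros x Hx. exists (existT _ (exist _ x Hx) (projT2 (F (exist _ x Hx)))).
    split; [reflexivity|]. apply bisim_pt_sum_model, HF.
  - rewrite tsat_flat. intros [x a] Ha. simpl in Ha. subst a.
    apply sat_sum_model, HF.
Qed.

Definition remaining_letters (phi : form) (p : letter) : list letter :=
  filter (fun q => negb (q =? p)) (letters phi).

Lemma In_remaining_letters phi p q : In q (remaining_letters phi p) <-> letters_minus phi p q.
Proof.
  unfold remaining_letters, letters_minus.
  rewrite filter_In, Bool.negb_true_iff, Nat.eqb_neq. tauto.
Qed.

Definition forget (phi : form) (p : letter) : form :=
  let Q := remaining_letters phi p in
  let n := depth phi in
  bigor (map (hintikka Q n)
    (filter (fun t => holds (exists (N : kmodel) (y : world N),
                               sat N y phi /\ sat N y (hintikka Q n t)))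
            (types Q n))).

Lemma sat_forget phi p M x :
  sat M x (forget phi p) <->
  exists (N : kmodel) (y : world N), bisim_pt (letters_minus phi p) N M y x /\ sat N y phi.
Proof.
  set (Q := remaining_letters phi p). set (n := depth phi).
  assert (HQ : forall q, In q Q <-> letters_minus phi p q) by apply In_remaining_letters.
  unfold forget. fold Q n. rewrite sat_bigor. split.
  - intros (f & Hf & Hx). apply in_map_iff in Hf as (t & <- & Ht).
    apply filter_In in Ht as [_ Ht]. apply holds_true in Ht as (N & y & Hy & Hyt).
    pose proof (hintikka_nbisim Q n t M N x y Hx Hyt) as Hb.
    exists (graft (fun q => In q Q) p M N), (inl (n, x, y)). split.
    + apply (bisim_pt_weaken (fun q => In q Q)); [intros q; apply HQ|].
      apply graft_bisim_pt; auto. intros q Hq. apply HQ in Hq. apply Hq.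
    + apply sat_graft; auto.
      intros q Hq. destruct (Nat.eq_dec q p); [auto|]. left. apply HQ. split; auto.
  - intros (N & y & Hb & Hy). destruct (hintikka_exists Q n N y) as (t & Ht & Hyt).
    exists (hintikka Q n t). split.
    + apply in_map, filter_In. split; auto. apply holds_true. eauto.
    + apply (fragment_nbisim_invariant _ n _ (fragment_hintikka Q n t) N M y x); auto.
      apply (nbisim_weaken (letters_minus phi p)); [intros q; apply HQ|].
      apply bisim_pt_nbisim. exact Hb.
Qed.

Theorem mainTheorem6 : forall (phi : form) (p : letter),
  exists theta : form,
    forall (M : kmodel) (X : team M),
      tsat M theta X <->
      exists (N : kmodel) (Y : team N),
        bisim_team (letters_minus phi p) N Y M X /\ tsat N phi Y.
Proof.
  intros phi p. exists (forget phi p). intros M X. rewrite tsat_flat. split.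
  - intros H. apply team_of_pointwise. intros x Hx. apply sat_forget, H, Hx.
  - intros (N & Y & [_ Hback] & HY) x Hx. apply sat_forget.
    rewrite tsat_flat in HY. destruct (Hback x Hx) as (y & Hy & Hb). eauto.
Qed.
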